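(* $\mathrm{CH}_1=\mathrm{CH}^{\varepsilon}_1$: a language is recognised by a history-deterministic $1$-VASS without $\varepsilon$-transitions under coverability acceptance if and only if it is recognised by a history-deterministic $1$-VASS with $\varepsilon$-transitions under coverability acceptance.
   Context: Fix a finite alphabet $\Sigma$. A $k$-VASS with $\varepsilon$-transitions is a tuple $(Q,q_0,F,\delta)$ with $Q$ a finite set of states, $q_0\in Q$ initial, $F\subseteq Q$ accepting, and $\delta\subseteq Q\times(\Sigma\cup\{\varepsilon\})\times\mathbb{Z}^k\times Q$ finite. A run is a sequence of transitions $(p_{i-1},\ell_i,d_i,p_i)$ with $p_0=q_0$ such that the counter vectors $v_0=\vec 0$, $v_i=v_{i-1}+d_i$ all lie in $\mathbb{N}^k$; it is a run on the word obtained by concatenating the labels $\ell_i$ (with $\varepsilon$ the empty word). Under coverability acceptance a run is accepting if its last state is in $F$; the language is the set of words having an accepting run. A VASS without $\varepsilon$-transitions is one with $\delta\subseteq Q\times\Sigma\times\mathbb{Z}^k\times Q$. A VASS (possibly with $\varepsilon$-transitions) is history-deterministic if there is a resolver which, given the run prefix built so far and the next input letter $a$, chooses a finite sequence of $\varepsilon$-transitions followed by one transition labelled $a$, and which at the end of the input chooses a final finite sequence of $\varepsilon$-transitions, such that for every word $w$ in the language the sequence of transitions so produced on $w$ is a run (counters stay nonnegative) and is accepting. (Without $\varepsilon$-transitions this is a function choosing one transition labelled $a$ at each step.) $\mathrm{CH}_1$ denotes the class of languages recognised by history-deterministic $1$-VASS without $\varepsilon$-transitions under coverability acceptance, and $\mathrm{CH}^{\varepsilon}_1$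 the class recognised by history-deterministic $1$-VASS with $\varepsilon$-transitions under coverability acceptance. *)

From mathcomp Require Import all_boot all_order all_algebra.
Set Implicit Arguments. Unset Strict Implicit. Unset Printing Implicit Defensive.
Import Order.TTheory GRing.Theory Num.Theory.
Local Open Scope ring_scope.

Definition trans_src {Q L : Type} (t : Q * L * int * Q) : Q := t.1.1.1.
Definition trans_lab {Q L : Type} (t : Q * L * int * Q) : L := t.1.1.2.
Definition trans_upd {Q L : Type} (t : Q * L * int * Q) : int := t.1.2.
Definition trans_tgt {Q L : Type} (t : Q * L * int * Q) : Q := t.2.

Fixpoint is_run {Q : finType} {L : eqType} (delta : seq (Q * L * int * Q))
    (q : Q) (c : int) (ts : seq (Q * L * int * Q)) : bool :=
  match ts with
  | [::] => true
  | t :: ts' => [&& t \in delta, trans_src t == q, 0 <= c + trans_upd t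
                  & is_run delta (trans_tgt t) (c + trans_upd t) ts']
  end.

Definition last_state {Q L : Type} (q : Q) (ts : seq (Q * L * int * Q)) : Q :=
  last q (map trans_tgt ts).

Section VASS.
Variable Sigma : finType.

Record VASS1 := {
  vQ : finType;
  vq0 : vQ;
  vF : {set vQ};
  vdelta : seq (vQ * Sigma * int * vQ)
}.

Definition vtrans (A : VASS1) := (vQ A * Sigma * int * vQ A)%type.

Definition vaccepting (A : VASS1) (ts : seq (vtrans A)) : bool :=
  is_run (vdelta A) (vq0 A) 0 ts && (last_state (vq0 A) ts \in vF A).

Definition vlang (A : VASS1) (w : seq Sigma) : Prop :=
  exists ts : seq (vtrans A), vaccepting ts && (map trans_lab ts == w).

Fixpoint vresolve (A : VASS1) (r : seq (vtrans A) -> Sigma -> vtrans A)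
    (pre : seq (vtrans A)) (w : seq Sigma) : seq (vtrans A) :=
  match w with
  | [::] => pre
  | a :: w' => vresolve r (rcons pre (r pre a)) w'
  end.

Definition vHD (A : VASS1) : Prop :=
  exists r : seq (vtrans A) -> Sigma -> vtrans A,
    forall w, vlang A w ->
      let ts := vresolve r [::] w in
      vaccepting ts && (map trans_lab ts == w).

(* ---------- 1-VASS with epsilon-transitions (None = epsilon) ---------- *)
Record EVASS1 := {
  eQ : finType;
  eq0 : eQ;
  eF : {set eQ};
  edelta : seq (eQ * option Sigma * int * eQ)
}.

Definition etrans (A : EVASS1) := (eQ A * option Sigma * int * eQ A)%type.

Definition eaccepting (A : EVASS1) (ts : seq (etrans A)) : bool :=
  is_run (edelta A) (eq0 A) 0 ts && (last_state (eq0 A) ts \in eF A).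

Definition eword (A : EVASS1) (ts : seq (etrans A)) : seq Sigma :=
  pmap id (map trans_lab ts).

Definition elang (A : EVASS1) (w : seq Sigma) : Prop :=
  exists ts : seq (etrans A), eaccepting ts && (eword ts == w).

(* Resolver: r pre a = chosen block (eps-transitions then one a-transition),
   f pre = final block of eps-transitions. *)
Fixpoint eresolve (A : EVASS1) (r : seq (etrans A) -> Sigma -> seq (etrans A))
    (f : seq (etrans A) -> seq (etrans A))
    (pre : seq (etrans A)) (w : seq Sigma) : seq (etrans A) :=
  match w with
  | [::] => pre ++ f pre
  | a :: w' => eresolve r f (pre ++ r pre a) w'
  end.

Fixpoint eresolve_shape (A : EVASS1) (r : seq (etrans A) -> Sigma -> seq (etrans A))
    (f : seq (etrans A) -> seq (etrans A))
    (pre : seq (etrans A)) (w : seq Sigma) : bool :=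
  match w with
  | [::] => map trans_lab (f pre) == nseq (size (f pre)) None
  | a :: w' =>
      (map trans_lab (r pre a) == rcons (nseq (size (r pre a)).-1 None) (Some a))
      && eresolve_shape r f (pre ++ r pre a) w'
  end.

Definition eHD (A : EVASS1) : Prop :=
  exists (r : seq (etrans A) -> Sigma -> seq (etrans A))
         (f : seq (etrans A) -> seq (etrans A)),
    forall w, elang A w ->
      eresolve_shape r f [::] w && eaccepting (eresolve r f [::] w).

End VASS.

Definition CH1 (Sigma : finType) (L : seq Sigma -> Prop) : Prop :=
  exists A : VASS1 Sigma, vHD A /\ forall w, L w <-> vlang A w.

Definition CH1eps (Sigma : finType) (L : seq Sigma -> Prop) : Prop :=
  exists A : EVASS1 Sigma, eHD A /\ forall w, L w <-> elang A w.

From mathcomp Require Import all_boot all_order all_algebra zify.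
From mathcomp Require Import boolp.
Set Implicit Arguments. Unset Strict Implicit. Unset Printing Implicit Defensive.
Import Order.TTheory GRing.Theory Num.Theory.
Local Open Scope ring_scope.

(* Dropping epsilon-transitions is free, so only the converse needs work.  Between two
   letters the epsilon-VASS A performs a block: epsilon-moves followed by one letter.  By
   pigeonhole a block longer than |Q|+1 repeats a state among its epsilon-moves; a cycle of
   nonpositive effect can be cut out, and a cycle of positive effect can be pumped, so that
   the target of the block is reached with an arbitrarily large counter.
   The epsilon-free VASS B has states (p, r) with a level r <= [cap] and states (p, omega).  In
   (p, r) with counter x it stands for A in state p with counter at most x + r, where x = 0
   unless r = [cap]; short blocks have bounded length and effect, so finitely many transitions
   between levels simulate them, while pumpable blocks lead to omega-states, where the counter
   no longer matters.  B has every transition that is sound for this reading, hence accepts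
   only words of L(A), and it is resolved by replaying the resolver of A on the word read so
   far and following the block it chooses. *)

Definition effect {Q L : Type} (ts : seq (Q * L * int * Q)) : int :=
  \sum_(t <- ts) trans_upd t.

Section Runs.
Variables (Q : finType) (L : eqType) (delta : seq (Q * L * int * Q)).
Implicit Types (ts pre cyc post : seq (Q * L * int * Q)) (p : Q) (c : int).

Lemma effect_nil : effect ([::] : seq (Q * L * int * Q)) = 0.
Proof. exact: big_nil. Qed.

Lemma effect_cons t ts : effect (t :: ts) = trans_upd t + effect ts.
Proof. exact: big_cons. Qed.

Lemma effect_cat ts1 ts2 : effect (ts1 ++ ts2) = effect ts1 + effect ts2.
Proof. exact: big_cat. Qed.

Lemma effect_iterate k cyc : effect (flatten (nseq k cyc)) = effect cyc *+ k.
Proof. by elim: k => [|k IH]; rewrite ?effect_nil // /= effect_cat IH mulrS. Qed.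

Lemma last_state_cat p ts1 ts2 :
  last_state p (ts1 ++ ts2) = last_state (last_state p ts1) ts2.
Proof. by rewrite /last_state map_cat last_cat. Qed.

Lemma last_state_iterate k p cyc :
  last_state p cyc = p -> last_state p (flatten (nseq k cyc)) = p.
Proof. by move=> cycle_p; elim: k => //= k IH; rewrite last_state_cat cycle_p. Qed.

Lemma is_run_cat p c ts1 ts2 :
  is_run delta p c (ts1 ++ ts2) =
  is_run delta p c ts1 && is_run delta (last_state p ts1) (c + effect ts1) ts2.
Proof.
elim: ts1 p c => [|t ts1 IH] p c /=; first by rewrite effect_nil addr0.
by rewrite IH effect_cons addrA -!andbA.
Qed.

Lemma is_run_le p c c' ts : c <= c' -> is_run delta p c ts -> is_run delta p c' ts.
Proof.
elim: ts p c c' => [|t ts IH] p c c' //= le_cc' /and4P[-> -> ge0 run_ts] /=.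
have le_upd : c + trans_upd t <= c' + trans_upd t by rewrite lerD2r.
by rewrite (le_trans ge0 le_upd) (IH _ _ _ le_upd).
Qed.

Lemma is_run_effect_ge0 p c ts : 0 <= c -> is_run delta p c ts -> 0 <= c + effect ts.
Proof.
elim: ts p c => [|t ts IH] p c /=; first by rewrite effect_nil addr0.
by move=> _ /and4P[_ _ ge0 run_ts]; rewrite effect_cons addrA; exact: IH run_ts.
Qed.

Lemma is_run_subset p c ts : is_run delta p c ts -> {subset ts <= delta}.
Proof.
elim: ts p c => [|t ts IH] p c //= /and4P[t_in _ _ /IH sub] u.
by rewrite inE => /predU1P[-> //|]; exact: sub.
Qed.

Definition max_update : nat := \max_(t <- delta) `|trans_upd t|%N.

Lemma max_updateP t : t \in delta -> (`|trans_upd t| <= max_update)%N.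
Proof. by move=> t_in; exact: (leq_bigmax_seq _ t_in). Qed.

Lemma is_run_from_large p c c' ts :
  is_run delta p c ts -> (size ts * max_update)%:R <= c' -> is_run delta p c' ts.
Proof.
elim: ts p c c' => [|t ts IH] p c c' //= /and4P[t_in -> _ run_ts].
have := max_updateP t_in; rewrite mulSn natrD t_in /= => le_upd le_c'.
rewrite (IH _ _ _ run_ts) ?andbT; lia.
Qed.

Lemma effect_bound p c ts :
  is_run delta p c ts -> `|effect ts| <= (size ts * max_update)%:R.
Proof.
move=> /is_run_subset; elim: ts => [|t ts IH] sub; first by rewrite effect_nil.
have := max_updateP (sub t (mem_head t ts)); rewrite effect_cons /= mulSn natrD.
have : {subset ts <= delta} by move=> u u_in; apply: sub; rewrite inE u_in orbT.
move/IH; lia.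
Qed.

Lemma run_has_cycle p ts : (#|Q| < size ts)%N ->
  exists pre cyc post, [/\ ts = pre ++ cyc ++ post, cyc != [::]
                         & last_state p (pre ++ cyc) = last_state p pre].
Proof.
move=> large; have : ~~ uniq (p :: map trans_tgt ts).
  apply: contraL large => /card_uniqP card_states; rewrite -leqNgt.
  by have := max_card (mem (p :: map trans_tgt ts)); rewrite card_states /= size_map => /ltnW.
case/(uniqPn p) => i [j [lt_ij]]; rewrite /= size_map ltnS => le_j.
have nth_states k : (k <= size ts)%N ->
    nth p (p :: map trans_tgt ts) k = last_state p (take k ts).
  elim: ts {large le_j} p k => [|t ts IH] p [|k] //=; rewrite ltnS => le_k.
  by rewrite (set_nth_default (trans_tgt t)) /= ?size_map ?ltnS // IH.
rewrite !nth_states ?(ltnW (leq_trans lt_ij le_j)) // => same_state.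
have take_j : take i ts ++ drop i (take j ts) = take j ts.
  by rewrite -{1}(take_takel ts (ltnW lt_ij)) cat_take_drop.
exists (take i ts), (drop i (take j ts)), (drop j ts); split.
- by rewrite catA take_j cat_take_drop.
- by rewrite -size_eq0 size_drop size_takel // subn_eq0 -ltnNge.
- by rewrite take_j same_state.
Qed.

Lemma is_run_iterate p c cyc k : last_state p cyc = p -> 0 <= effect cyc ->
  is_run delta p c cyc -> is_run delta p c (flatten (nseq k cyc)).
Proof.
move=> cycle_p ge0; elim: k c => //= k IH c run_cyc.
by rewrite is_run_cat run_cyc cycle_p IH // (is_run_le _ run_cyc) // lerDl.
Qed.

Lemma is_run_pump p c pre cyc post k :
  last_state p (pre ++ cyc) = last_state p pre -> 0 <= effect cyc ->
  is_run delta p c (pre ++ cyc ++ post) ->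
  is_run delta p c (pre ++ flatten (nseq k cyc) ++ cyc ++ post).
Proof.
rewrite last_state_cat => cycle_p ge0; rewrite !is_run_cat.
case/and3P=> -> run_cyc run_post; rewrite last_state_iterate // effect_iterate.
rewrite is_run_iterate //= (is_run_le _ run_cyc) ?(is_run_le _ run_post) //.
  by rewrite lerD2r lerDl mulrn_wge0.
by rewrite lerDl mulrn_wge0.
Qed.

Lemma is_run_cut p c pre cyc post :
  last_state p (pre ++ cyc) = last_state p pre -> effect cyc <= 0 ->
  is_run delta p c (pre ++ cyc ++ post) -> is_run delta p c (pre ++ post).
Proof.
rewrite last_state_cat => cycle_p le0; rewrite !is_run_cat cycle_p.
by case/and3P=> -> _ /(is_run_le _)-> //; rewrite gerDl.
Qed.
End Runs.

Section Blocks.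
Variables (Sigma : finType) (A : EVASS1 Sigma).
Local Notation Q := (eQ A).
Local Notation delta := (edelta A).
Local Notation TA := (Q * option Sigma * int * Q)%type.
Implicit Types (ts pre cyc post : seq TA) (t : TA) (p q : Q).
Implicit Types (a : Sigma) (w : seq Sigma) (c m x : int).

Definition is_eps t : bool := trans_lab t == None.

Definition is_block a ts : bool :=
  map trans_lab ts == rcons (nseq (size ts).-1 None) (Some a).

Lemma is_block_rcons a ts t :
  is_block a (rcons ts t) = all is_eps ts && (trans_lab t == Some a).
Proof.
rewrite /is_block size_rcons map_rcons eqseq_rcons; congr andb.
by elim: ts => //= t' ts <-; rewrite eqseq_cons.
Qed.

Lemma is_block_cat a ts1 ts2 :
  ts2 != [::] -> is_block a (ts1 ++ ts2) = all is_eps ts1 && is_block a ts2.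
Proof. by case/lastP: ts2 => // ts2 t _; rewrite -rcons_cat !is_block_rcons all_cat andbA. Qed.

Lemma eword_block a ts : is_block a ts -> eword ts = [:: a].
Proof. by rewrite /eword => /eqP->; rewrite -cats1 pmap_cat; elim: (size ts).-1. Qed.

Definition accepts p c w : Prop :=
  exists ts, [&& is_run delta p c ts, last_state p ts \in eF A & eword ts == w].

Lemma accepts_le p c c' w : c <= c' -> accepts p c w -> accepts p c' w.
Proof. by move=> le_cc' [ts /and3P[/(is_run_le le_cc') run fin lab]]; exists ts; apply/and3P. Qed.

Definition reach p a q m x : Prop := exists ts,
  [&& is_run delta p m ts, is_block a ts, last_state p ts == q & x <= m + effect ts].

Definition unbounded p a q m : Prop := forall x, reach p a q m x.

Lemma reach_le p a q m m' x y :
  m <= m' -> y <= x + (m' - m) -> reach p a q m x -> reach p a q m' y.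
Proof.
move=> le_mm' le_y [ts /and4P[/(is_run_le le_mm') run block last_q le_x]].
by exists ts; rewrite run block last_q /=; lia.
Qed.

Lemma unbounded_le p a q m m' : m <= m' -> unbounded p a q m -> unbounded p a q m'.
Proof.
move=> le_mm' reach_m x; have le_x : x <= x + (m' - m) by lia.
exact: reach_le le_mm' le_x (reach_m x).
Qed.

Lemma reach_accepts p a q m x w : reach p a q m x -> accepts q x w -> accepts p m (a :: w).
Proof.
case=> ts /and4P[run block /eqP last_q le_x] /(accepts_le le_x) [ts' /and3P[run' fin /eqP lab']].
exists (ts ++ ts'); rewrite is_run_cat run last_state_cat last_q run' fin /=.
by rewrite /eword map_cat pmap_cat -/(eword ts) (eword_block block) -/(eword ts') lab'.
Qed.

Lemma pump_unbounded a p c pre cyc post :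
  0 <= c -> last_state p (pre ++ cyc) = last_state p pre -> 0 < effect cyc ->
  post != [::] -> is_run delta p c (pre ++ cyc ++ post) -> is_block a (pre ++ cyc ++ post) ->
  unbounded p a (last_state p (pre ++ cyc ++ post)) c.
Proof.
move=> ge0 cycle pos post_nil run block x; set k := `|x|%N.
have iterate_eps : all is_eps (flatten (nseq k cyc)).
  move: block; rewrite catA is_block_cat // all_cat => /andP[/andP[_ cyc_eps] _].
  by elim: k => //= k IH; rewrite all_cat cyc_eps IH.
have last_pumped s : last_state p (pre ++ flatten (nseq k cyc) ++ s) = last_state p (pre ++ s).
  by move: cycle; rewrite !last_state_cat => cycle; rewrite last_state_iterate.
exists (pre ++ flatten (nseq k cyc) ++ cyc ++ post); apply/and4P; split.
- by apply: is_run_pump => //; exact: ltW.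
- by move: block; rewrite !catA !is_block_cat // !all_cat => /andP[/andP[-> ->] ->]; rewrite !andbT.
- by rewrite last_pumped.
have : k%:R <= effect cyc *+ k by rewrite lerMn2r; apply/orP; right; lia.
have := is_run_effect_ge0 ge0 run; rewrite !effect_cat effect_iterate /k.
by move: (effect cyc *+ _) => ek; lia.
Qed.

Lemma short_block_or_unbounded a p c ts :
  0 <= c -> is_run delta p c ts -> is_block a ts ->
  (exists2 sh, [&& is_run delta p c sh, is_block a sh, last_state p sh == last_state p ts
                 & effect ts <= effect sh] & (size sh <= #|Q|.+1)%N)
  \/ unbounded p a (last_state p ts) c.
Proof.
move=> ge0; have [n] := ubnP (size ts); elim: n ts => // n IH ts.
rewrite ltnS => size_le run block.
have [short|long] := leqP (size ts) #|Q|.+1.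
  by left; exists ts; rewrite ?run ?block ?eqxx ?lexx.
case/lastP: ts => [//|eps t] in size_le run block long *.
rewrite size_rcons ltnS in long.
have [pre [cyc [post [eps_eq cyc_nil cycle]]]] := run_has_cycle p long.
have ts_eq : rcons eps t = pre ++ cyc ++ rcons post t by rewrite eps_eq !rcons_cat.
rewrite ts_eq in size_le run block *.
have [pos|nonpos] := ltrP 0 (effect cyc).
  by right; apply: pump_unbounded; rewrite // -size_eq0 size_rcons.
have last_cut : last_state p (pre ++ rcons post t) = last_state p (pre ++ cyc ++ rcons post t).
  by move: cycle; rewrite !last_state_cat => ->.
rewrite -last_cut.
have [|||[sh /and4P[run_sh block_sh last_sh le_sh] size_sh]|] := IH (pre ++ rcons post t).
- apply: leq_trans size_le; rewrite !size_cat -addnS leq_add2l -add1n leq_add2r.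
  by rewrite lt0n size_eq0.
- exact: is_run_cut run.
- by move: block; rewrite -!rcons_cat !is_block_rcons !all_cat => /andP[/and3P[-> _ ->] ->].
- left; exists sh => //; rewrite run_sh block_sh last_sh /=.
  by apply: le_trans le_sh; rewrite !effect_cat lerD2l gerDr.
- by right.
Qed.
End Blocks.

Lemma uniform_threshold (T : finType) (P : T -> nat -> Prop) :
  (forall x m n, (m <= n)%N -> P x m -> P x n) ->
  exists N, forall x n, P x n -> P x (minn n N).
Proof.
move=> P_mono; suff [N PN] : exists N, forall x, x \in enum T -> forall n, P x n -> P x (minn n N).
  by exists N => x; apply: PN; rewrite mem_enum.
elim: (enum T) => [|x s [N PN]]; first by exists 0%N.
have [[n0 P_n0]|P_never] := pselect (exists n, P x n); last first.
  by exists N => y; rewrite inE => /predU1P[-> n P_n|/PN//]; case: P_never; exists n.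
exists (maxn N n0) => y; rewrite inE => /predU1P[-> n P_n|y_s n P_n].
  have [//|_] := leqP n (maxn N n0).
  by apply: P_mono P_n0; rewrite leq_maxr.
by apply: P_mono (PN y y_s n P_n); lia.
Qed.

Definition pick_in (T : eqType) (x0 : T) (s : seq T) (P : T -> Prop) : T :=
  nth x0 s (find (fun x => `[< P x >]) s).

Lemma pick_inP (T : eqType) (x0 : T) (s : seq T) (P : T -> Prop) :
  (exists2 x, x \in s & P x) -> pick_in x0 s P \in s /\ P (pick_in x0 s P).
Proof.
case=> x x_s Px; have has_P : has (fun x => `[< P x >]) s.
  by apply/hasP; exists x => //; exact/asboolP.
by split; [rewrite mem_nth // -has_find | exact/asboolP/(nth_find x0 has_P)].
Qed.

Section EpsilonElimination.
Variables (Sigma : finType) (A : EVASS1 Sigma) (Phi Theta : nat).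
Local Notation Q := (eQ A).
Local Notation delta := (edelta A).
Local Notation TA := (Q * option Sigma * int * Q)%type.

Hypothesis accepts_threshold :
  forall (p : Q) (n : nat), accepts p n [::] -> accepts p (minn n Phi) [::].
Hypothesis unbounded_threshold :
  forall (p : Q) a q (n : nat), unbounded p a q n -> unbounded p a q (minn n Theta).

Definition short_bound : nat := (#|Q|.+1 * max_update delta)%N.
(* At level [cap] any short block can start, and accepting by epsilon-moves never needs
   more than [Phi]. *)
Definition cap : nat := (short_bound.*2 + Phi)%N.
Definition update_bound : nat := (cap + short_bound + Theta)%N.

(* The level [None] is omega. *)
Local Notation QB := (Q * option 'I_cap.+1)%type.
Local Notation TB := (QB * Sigma * int * QB)%type.

Definition sem_accepts (s : QB) (cB : int) (w : seq Sigma) : Prop :=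
  if s.2 is Some r then accepts s.1 (cB + (r : nat)%:Z) w else exists x, accepts s.1 x w.

Definition sound_trans (t : TB) : Prop := forall cB w,
  0 <= cB + trans_upd t -> sem_accepts (trans_tgt t) (cB + trans_upd t) w ->
  sem_accepts (trans_src t) cB (trans_lab t :: w).

Definition bounded_trans (i : QB * Sigma * 'I_(update_bound.*2).+1 * QB) : TB :=
  (i.1.1.1, i.1.1.2, (i.1.2 : nat)%:Z - update_bound%:Z, i.2).

Definition epsfree_trans : seq TB :=
  [seq t <- map bounded_trans (enum {: QB * Sigma * 'I_(update_bound.*2).+1 * QB})
     | `[< sound_trans t >]].

Definition epsfree_final : {set QB} := [set s | `[< sem_accepts s 0 [::] >]].

Definition epsfree_init : QB := (eq0 A, Some ord0).

Definition epsfree : VASS1 Sigma := Build_VASS1 epsfree_init epsfree_final epsfree_trans.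

Lemma mem_epsfree_trans t :
  (`|trans_upd t| <= update_bound)%N -> sound_trans t -> t \in epsfree_trans.
Proof.
case: t => [[[s a] u] s']; rewrite /trans_upd /= => le_u sound.
rewrite mem_filter; apply/andP; split; first exact/asboolP.
have lt_u : (absz (u + update_bound%:Z)%R < (update_bound.*2).+1)%N.
  by rewrite -addnn; move: update_bound le_u => K; lia.
apply/mapP; exists (s, a, inord (absz (u + update_bound%:Z)%R), s'); first by rewrite mem_enum.
by rewrite /bounded_trans /= inordK //; congr (_, _, _, _); move: update_bound le_u => K; lia.
Qed.

Lemma sem_accepts_le s cB cB' w :
  cB <= cB' -> sem_accepts s cB w -> sem_accepts s cB' w.
Proof.
by case: s => p [r|] //= le_cB; apply: accepts_le; rewrite lerD2r.
Qed.

Lemma epsfree_run_sound s cB ts :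
  0 <= cB -> is_run epsfree_trans s cB ts -> last_state s ts \in epsfree_final ->
  sem_accepts s cB (map trans_lab ts).
Proof.
elim: ts s cB => [|t ts IH] s cB ge0 /=.
  by move=> _; rewrite inE => /asboolP; apply: sem_accepts_le.
case/and4P=> + /eqP src ge0' run fin; rewrite mem_filter => /andP[/asboolP sound _].
by rewrite -src; apply: sound ge0' (IH _ _ ge0' run fin).
Qed.

Lemma epsfree_lang_sub w : vlang epsfree w -> elang A w.
Proof.
case=> ts /andP[/andP[run fin] /eqP lab].
have [ts' /and3P[run' fin' /eqP lab']] := epsfree_run_sound (lexx 0) run fin.
by exists ts'; move: run'; rewrite /eaccepting fin' lab' -lab eqxx /= add0r => ->.
Qed.

Lemma sound_trans_omega p a q u m x :
  reach p a q m x -> sound_trans ((p, None), a, u, (q, None)).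
Proof.
move=> reach_q cB w _ [y acc]; exists (m + `|y - x|).
by apply: reach_accepts acc; apply: reach_le reach_q; lia.
Qed.

Lemma sound_trans_unbounded p (r : 'I_cap.+1) a q (n : int) :
  unbounded p a q n -> sound_trans ((p, Some r), a, (r : nat)%:Z - n, (q, None)).
Proof.
move=> unb cB w; rewrite /trans_upd /= => ge0 [x acc].
by apply: reach_accepts acc; apply: reach_le (unb x); lia.
Qed.

Lemma sound_trans_bounded p (r r' : 'I_cap.+1) a q (e : int) :
  reach p a q ((r' : nat)%:Z - e) (r' : nat)%:Z ->
  sound_trans ((p, Some r), a, (r : nat)%:Z + e - (r' : nat)%:Z, (q, Some r')).
Proof.
move=> reach_q cB w; rewrite /trans_upd /= => ge0 acc.
by apply: reach_accepts acc; apply: reach_le reach_q; lia.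
Qed.

Definition sim (s : QB) (cB : int) (p : Q) (c : int) : Prop :=
  s.1 = p /\
  if s.2 is Some r then c <= cB + (r : nat)%:Z /\ ((r : nat) = cap \/ cB = 0) else True.

Definition good_move (s : QB) (cB : int) (a : Sigma) (p : Q) (c : int) (t : TB) : Prop :=
  [/\ trans_src t = s, trans_lab t = a, 0 <= cB + trans_upd t
    & sim (trans_tgt t) (cB + trans_upd t) p c].

Lemma sim_final s cB p c : 0 <= c -> sim s cB p c -> accepts p c [::] -> s \in epsfree_final.
Proof.
case: s => q [r|] ge0 [/= <- sim_r] acc; rewrite inE; apply/asboolP => /=; last by exists c.
case: sim_r => le_c [r_cap|cB0]; last by apply: accepts_le acc; rewrite cB0 add0r in le_c.
have [n c_n] : exists n : nat, c = n by exists `|c|%N; lia.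
rewrite c_n in acc; apply: accepts_le (accepts_threshold acc).
by rewrite r_cap /cap; lia.
Qed.

Lemma sim_step_omega cB p c a blk : 0 <= cB ->
  is_run delta p c blk -> is_block a blk ->
  exists2 t, t \in epsfree_trans & good_move (p, None) cB a (last_state p blk) (c + effect blk) t.
Proof.
move=> ge0 run block; exists ((p, None), a, 0, (last_state p blk, None)).
  apply: mem_epsfree_trans => //; apply: (sound_trans_omega (m := c) (x := c + effect blk)).
  by exists blk; rewrite run block eqxx lexx.
by split; rewrite /trans_upd ?addr0.
Qed.

Lemma sim_step_unbounded (r : 'I_cap.+1) cB p c a q c' :
  0 <= c -> c <= cB + r%:Z -> unbounded p a q c ->
  exists2 t, t \in epsfree_trans & good_move (p, Some r) cB a q c' t.
Proof.
move=> ge0 le_c unb; have [n c_n] : exists n : nat, c = n by exists `|c|%N; lia.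
have lt_r := ltn_ord r; set m := minn n Theta.
exists ((p, Some r), a, r%:Z - m%:Z, (q, None)); last first.
  by split; rewrite /trans_upd //=; move: le_c; rewrite c_n /m; lia.
apply: mem_epsfree_trans; first by rewrite /trans_upd /update_bound /m /=; lia.
by apply/sound_trans_unbounded/unbounded_threshold; rewrite -c_n.
Qed.

Lemma sim_step_short (r : 'I_cap.+1) cB p c a sh e0 :
  0 <= c -> c <= cB + r%:Z -> is_run delta p c sh -> is_block a sh ->
  (size sh <= #|Q|.+1)%N -> e0 <= effect sh ->
  exists2 t, t \in epsfree_trans & good_move (p, Some r) cB a (last_state p sh) (c + e0) t.
Proof.
move=> ge0 le_c run block short le_e0.
have [e def_e] : {e | effect sh = e} by exists (effect sh).
rewrite def_e in le_e0.
have size_bound : (size sh * max_update delta <= short_bound)%N by rewrite leq_mul2r short orbT.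
have e_bound : `|e| <= short_bound%:R.
  by rewrite -def_e; apply: le_trans (effect_bound run) _; rewrite ler_nat.
have ge0_e : 0 <= c + e by rewrite -def_e; exact: is_run_effect_ge0 run.
(* The new level is the new counter of A, saturated at [cap]. *)
have [r' r'_val] : {r' : 'I_cap.+1 | r' = minn cap (absz (cB + r%:Z + e)%R) :> nat}.
  by exists (inord (minn cap (absz (cB + r%:Z + e)%R))); rewrite inordK // ltnS geq_minl.
have lt_r := ltn_ord r.
exists ((p, Some r), a, r%:Z + e - r'%:Z, (last_state p sh, Some r')); last first.
  split; rewrite /trans_upd //=; first by rewrite r'_val; lia.
  split => //=; split; first lia.
  by rewrite r'_val; case: (leqP cap (absz (cB + r%:Z + e)%R)) => _; [left | right]; lia.
apply: mem_epsfree_trans.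
  by rewrite /trans_upd /update_bound r'_val /=; move: e_bound; lia.
apply: sound_trans_bounded; exists sh; rewrite block eqxx def_e; apply/andP; split; last by lia.
have [le_cap|lt_cap] := leqP cap (absz (cB + r%:Z + e)%R).
  apply: is_run_from_large run _; rewrite r'_val (minn_idPl le_cap) /cap.
  by move: e_bound size_bound; lia.
by apply: is_run_le run; rewrite r'_val; lia.
Qed.

Lemma sim_step s cB p c a blk :
  0 <= cB -> 0 <= c -> sim s cB p c -> is_run delta p c blk -> is_block a blk ->
  exists2 t, t \in epsfree_trans & good_move s cB a (last_state p blk) (c + effect blk) t.
Proof.
case: s => p' [r|] ge0B ge0 [/= -> sim_r] run block; last exact: sim_step_omega.
case: sim_r => le_c _.
have [[sh /and4P[run_sh block_sh /eqP <- le_sh] short]|unb] :=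
  short_block_or_unbounded ge0 run block.
  by apply: sim_step_short.
exact: (sim_step_unbounded _ ge0 le_c unb).
Qed.

Section Resolver.
Variables (rA : seq TA -> Sigma -> seq TA) (fA : seq TA -> seq TA).

Fixpoint replay (pre : seq TA) (u : seq Sigma) : seq TA :=
  if u is a :: u' then replay (pre ++ rA pre a) u' else pre.

Lemma replay_rcons pre u a : replay pre (rcons u a) = replay pre u ++ rA (replay pre u) a.
Proof. by elim: u pre => //= b u IH pre; rewrite IH. Qed.

Lemma eresolve_prefix pre v : exists s, eresolve rA fA pre v = pre ++ s.
Proof.
elim: v pre => [|a v IH] pre /=; first by exists (fA pre).
by have [s ->] := IH (pre ++ rA pre a); exists (rA pre a ++ s); rewrite catA.
Qed.

Definition epsfree_resolver (preB : seq TB) (a : Sigma) : TB :=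
  let pA := replay [::] (map trans_lab preB) in
  pick_in (epsfree_init, a, 0, epsfree_init) epsfree_trans
    (good_move (last_state epsfree_init preB) (effect preB) a
               (last_state (last_state (eq0 A) pA) (rA pA a)) (effect pA + effect (rA pA a))).

Lemma epsfree_resolver_complete v : forall preB pA,
  pA = replay [::] (map trans_lab preB) ->
  is_run epsfree_trans epsfree_init 0 preB ->
  sim (last_state epsfree_init preB) (effect preB) (last_state (eq0 A) pA) (effect pA) ->
  eresolve_shape rA fA pA v -> eaccepting (eresolve rA fA pA v) ->
  let tsB := vresolve (A := epsfree) epsfree_resolver preB v in
  [&& is_run epsfree_trans epsfree_init 0 tsB, last_state epsfree_init tsB \in epsfree_final
    & map trans_lab tsB == map trans_lab preB ++ v].
Proof.
elim: v => [|a v IH] preB pA def_pA runB simB /=.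
  move=> /eqP eps_f /andP[]; rewrite is_run_cat last_state_cat add0r => /andP[runA run_f] fin.
  rewrite runB cats0 eqxx andbT /=; apply: sim_final simB _.
    by have := is_run_effect_ge0 (lexx 0) runA; rewrite add0r.
  by exists (fA pA); rewrite run_f fin /eword eps_f; elim: size.
move=> /andP[block shape] acc; have [s def_s] := eresolve_prefix (pA ++ rA pA a) v.
move: (acc); rewrite /eaccepting def_s -catA is_run_cat add0r => /andP[/andP[runA]].
rewrite is_run_cat => /andP[run_blk _] _.
have ge0A : 0 <= effect pA by have := is_run_effect_ge0 (lexx 0) runA; rewrite add0r.
have ge0B : 0 <= effect preB by have := is_run_effect_ge0 (lexx 0) runB; rewrite add0r.
set t := epsfree_resolver preB a.
have [t_in [src lab ge0t simt]] : t \in epsfree_trans /\ good_move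
    (last_state epsfree_init preB) (effect preB) a
    (last_state (last_state (eq0 A) pA) (rA pA a)) (effect pA + effect (rA pA a)) t.
  by rewrite /t /epsfree_resolver -def_pA; exact: pick_inP (sim_step ge0B ge0A simB run_blk block).
have := IH (rcons preB t) (pA ++ rA pA a).
rewrite map_rcons lab cat_rcons; apply => //.
- by rewrite replay_rcons -def_pA.
- by rewrite -cats1 is_run_cat runB /= t_in src eqxx add0r ge0t.
- rewrite -cats1 last_state_cat effect_cat effect_cons effect_nil addr0.
  by rewrite last_state_cat effect_cat.
Qed.

Lemma epsfree_resolverP w :
  eresolve_shape rA fA [::] w && eaccepting (eresolve rA fA [::] w) ->
  let ts := vresolve (A := epsfree) epsfree_resolver [::] w in
  vaccepting ts && (map trans_lab ts == w).
Proof.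
case/andP=> shape acc.
have sim_init : sim epsfree_init 0 (eq0 A) 0 by split=> //=; split; [|right].
have := epsfree_resolver_complete (v := w) (preB := [::]) erefl isT.
rewrite /= !effect_nil => /(_ sim_init shape acc).
by case/and3P=> run fin lab; rewrite /vaccepting run fin lab.
Qed.
End Resolver.
End EpsilonElimination.

Lemma accepts_threshold_exists (Sigma : finType) (A : EVASS1 Sigma) : exists Phi,
  forall (p : eQ A) (n : nat), accepts p n [::] -> accepts p (minn n Phi) [::].
Proof. by apply: uniform_threshold => p m n le_mn; apply: accepts_le; rewrite lez_nat. Qed.

Lemma unbounded_threshold_exists (Sigma : finType) (A : EVASS1 Sigma) : exists Theta,
  forall (p : eQ A) a q (n : nat), unbounded p a q n -> unbounded p a q (minn n Theta).
Proof.
suff [Theta th] : exists Theta, forall (i : eQ A * Sigma * eQ A) (n : nat),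
    unbounded i.1.1 i.1.2 i.2 n -> unbounded i.1.1 i.1.2 i.2 (minn n Theta).
  by exists Theta => p a q; exact: th (p, a, q).
by apply: uniform_threshold => i m n le_mn; apply: unbounded_le; rewrite lez_nat.
Qed.

Lemma CH1eps_CH1 (Sigma : finType) (L : seq Sigma -> Prop) : CH1eps L -> CH1 L.
Proof.
case=> A [[rA [fA resolved]] L_A].
have [Phi accepts_thr] := accepts_threshold_exists A.
have [Theta unbounded_thr] := unbounded_threshold_exists A.
set rB := @epsfree_resolver _ A Phi Theta rA.
have complete w : elang A w -> _ := fun Lw =>
  epsfree_resolverP accepts_thr unbounded_thr (resolved w Lw).
exists (epsfree A Phi Theta); split; first by exists rB => w /epsfree_lang_sub /complete.
move=> w; rewrite L_A; split => [/complete/andP[acc /eqP lab] | /epsfree_lang_sub //].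
by exists (vresolve (A := epsfree A Phi Theta) rB [::] w); rewrite acc lab eqxx.
Qed.

Section Embedding.
Variables (Sigma : finType) (B : VASS1 Sigma).
Local Notation Q := (vQ B).
Local Notation TV := (Q * Sigma * int * Q)%type.
Local Notation TE := (Q * option Sigma * int * Q)%type.

Definition label_some (t : TV) : TE :=
  (trans_src t, Some (trans_lab t), trans_upd t, trans_tgt t).

Definition label_get (t : TE) : option TV :=
  if trans_lab t is Some a then Some (trans_src t, a, trans_upd t, trans_tgt t) else None.

Lemma label_someK : pcancel label_some label_get.
Proof. by case=> [[[]]]. Qed.

Definition with_eps : EVASS1 Sigma :=
  Build_EVASS1 (vq0 B) (vF B) (map label_some (vdelta B)).

Lemma is_run_label_some p c ts :
  is_run (map label_some (vdelta B)) p c (map label_some ts) = is_run (vdelta B) p c ts.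
Proof. by elim: ts p c => //= t ts IH p c; rewrite (mem_map (pcan_inj label_someK)) IH. Qed.

Lemma last_state_label_some p ts : last_state p (map label_some ts) = last_state p ts.
Proof. by rewrite /last_state -map_comp. Qed.

Lemma eword_label_some ts : eword (A := with_eps) (map label_some ts) = map trans_lab ts.
Proof. by rewrite /eword; elim: ts => //= t ts ->. Qed.

Lemma is_run_with_eps p c ts :
  is_run (map label_some (vdelta B)) p c ts -> exists ts', ts = map label_some ts'.
Proof.
elim: ts p c => [|t ts IH] p c /=; first by exists [::].
by case/and4P=> /mapP[t' _ ->] _ _ /IH[ts' ->]; exists (t' :: ts').
Qed.

Lemma with_eps_lang w : elang with_eps w <-> vlang B w.
Proof.
split=> [[ts /andP[/andP[run fin] lab]] | [ts /andP[/andP[run fin] lab]]].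
  have [ts' def_ts] := is_run_with_eps run; subst ts; exists ts'.
  move: run fin lab; rewrite /= is_run_label_some last_state_label_some eword_label_some.
  by rewrite /vaccepting => -> -> ->.
exists (map label_some ts).
by rewrite /eaccepting /= is_run_label_some last_state_label_some eword_label_some run fin.
Qed.

Variable rv : seq TV -> Sigma -> TV.

Definition with_eps_resolver (pre : seq TE) (a : Sigma) : seq TE :=
  [:: label_some (rv (pmap label_get pre) a)].

Lemma vresolve_prefix pre w : exists s, vresolve rv pre w = pre ++ s.
Proof.
elim: w pre => [|a w IH] pre /=; first by exists [::]; rewrite cats0.
by have [s ->] := IH (rcons pre (rv pre a)); exists (rv pre a :: s); rewrite cat_rcons.
Qed.

Lemma eresolve_label_some pre w :
  eresolve (A := with_eps) with_eps_resolver (fun=> [::]) (map label_some pre) w =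
  map label_some (vresolve rv pre w).
Proof.
elim: w pre => [|a w IH] pre /=; first by rewrite cats0.
by rewrite /with_eps_resolver (map_pK label_someK) cats1 -map_rcons IH.
Qed.

Lemma eresolve_shape_label_some pre w :
  eresolve_shape (A := with_eps) with_eps_resolver (fun=> [::]) (map label_some pre) w =
  (map trans_lab (vresolve rv pre w) == map trans_lab pre ++ w).
Proof.
elim: w pre => [|a w IH] pre /=; first by rewrite cats0 !eqxx.
rewrite /with_eps_resolver (map_pK label_someK) cats1 -map_rcons IH /=.
have [s ->] := vresolve_prefix (rcons pre (rv pre a)) w.
by rewrite !map_cat map_rcons -!cats1 -!catA !eqseq_cat //= !eqxx /= !eqseq_cons andbT.
Qed.
End Embedding.

Lemma CH1_CH1eps (Sigma : finType) (L : seq Sigma -> Prop) : CH1 L -> CH1eps L.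
Proof.
case=> B [[rv resolved] L_B]; exists (with_eps B); split; last first.
  by move=> w; rewrite L_B with_eps_lang.
exists (with_eps_resolver rv), (fun=> [::]) => w /with_eps_lang /resolved.
case/andP=> acc lab; rewrite (eresolve_label_some rv [::]) (eresolve_shape_label_some rv [::]) lab.
by move: acc; rewrite /vaccepting /eaccepting is_run_label_some last_state_label_some.
Qed.

Theorem mainTheorem6 (Sigma : finType) (L : seq Sigma -> Prop) :
  CH1 L <-> CH1eps L.
Proof. by split; [exact: CH1_CH1eps | exact: CH1eps_CH1]. Qed.
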